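(* Let $k,l$ be positive integers with $l<k+2$. Let $Y^l_k$ be the toric variety given as the GIT quotient of $\mathbb{A}^5$, with coordinates $y_1,y_2,x_1,x_2,x_3$, by $\mathbb{G}_m^2$ acting with weights $y_1:(1,0)$, $y_2:(0,1)$, $x_1:(0,1)$, $x_2:(1,l-k)$, $x_3:(0,k)$, with respect to the stability condition $\omega=(1,2)$. Let $X$ be the vanishing locus of a general section of $\mathcal{O}(1,l)$ on $Y^l_k$. Then the projection $\pi\colon Y^l_k\to{\mathbb{P}}(1,1,k)$, $(y_1,y_2,x_1,x_2,x_3)\mapsto(y_2:x_1:x_3)$, maps $X$ onto ${\mathbb{P}}(1,1,k)$ and contracts $l$ disjoint rational curves.
   Context: Work over an algebraically closed field of characteristic zero. $\mathcal{O}(a,b)$ denotes the rank-one sheaf on $Y^l_k$ associated to the character $(a,b)$ of $\mathbb{G}_m^2$; its sections are polynomials in the Cox coordinates of bidegree $(a,b)$. The toric variety attached to a weight matrix and stability condition $\omega$ is $(\mathbb{A}^5\setminus Z_\omega)/\mathbb{G}_m^2$, with $Z_\omega$ the unstable locus. *)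

From HB Require Import structures.
From mathcomp Require Import all_boot all_order all_algebra.
From mathcomp Require Import mpoly.
Set Implicit Arguments.
Unset Strict Implicit.
Unset Printing Implicit Defensive.
Import Order.TTheory GRing.Theory Num.Theory.
Local Open Scope ring_scope.

(* A weight matrix is a map w : 'I_n -> int * int (the weight of the   *)
(* i-th Cox coordinate); omega : int * int is the stability condition.  *)

Section ToricGIT.
Variable K : fieldType.

(* x is NOT in the unstable locus Z_omega iff omega lies in the (rational)
   cone spanned by the weights of the coordinates that are nonzero at x. *)
Definition semistable n (w : 'I_n -> int * int) (om : int * int)
    (x : 'I_n -> K) : Prop :=
  exists c : 'I_n -> rat,
    [/\ forall i, 0 <= c i,
        forall i, x i = 0 -> c i = 0,
        \sum_i c i * ((w i).1)%:~R = (om.1)%:~R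
      & \sum_i c i * ((w i).2)%:~R = (om.2)%:~R].

Definition torus_act n (w : 'I_n -> int * int) (t1 t2 : K) (x : 'I_n -> K)
  : 'I_n -> K := fun i => t1 ^ (w i).1 * t2 ^ (w i).2 * x i.

Definition same_orbit n (w : 'I_n -> int * int) (x y : 'I_n -> K) : Prop :=
  exists t1 t2 : K, [/\ t1 != 0, t2 != 0 & y = torus_act w t1 t2 x].

(* Weighted projective space P(a_0,...,a_{m-1}) = (A^m \ 0)/G_m. *)
Definition wp_point m (p : 'I_m -> K) : Prop := exists i, p i != 0.
Definition wp_same m (a : 'I_m -> nat) (p q : 'I_m -> K) : Prop :=
  exists lam : K, lam != 0 /\ q = (fun i => lam ^+ a i * p i).

(* sections of O(a,b): polynomials in the Cox coordinates all of whose
   monomials have bidegree (a,b) *)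
Definition is_section n (w : 'I_n -> int * int) (ab : int * int)
    (f : {mpoly K[n]}) : Prop :=
  forall mon, mon \in msupp f ->
    (\sum_i (mon i)%:Z * (w i).1, \sum_i (mon i)%:Z * (w i).2) = ab.

(* "P holds for a general f in the vector space S": P holds on a nonempty
   Zariski-open subset of S, i.e. on a nonempty basic open set
   { f in S | D(coefficients of f) != 0 } for some polynomial D in finitely
   many coefficients of f. *)
Definition holds_generally n (S : {mpoly K[n]} -> Prop)
    (P : {mpoly K[n]} -> Prop) : Prop :=
  exists (N : nat) (ms : 'I_N -> 'X_{1..n}) (D : {mpoly K[N]}),
    (exists f0, S f0 /\ D.@[fun j => f0@_(ms j)] != 0) /\
    (forall f, S f -> D.@[fun j => f@_(ms j)] != 0 -> P f).

Definition homog_of_deg n (d : nat) (p : {mpoly K[n]}) : Prop :=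
  forall mon, mon \in msupp p -> mdeg mon = d.

(* A morphism P^1 -> (A^n \ Z_omega)/G_m^2 given in Cox coordinates:
   phi_i(s,t) homogeneous of degree a*w_i1 + b*w_i2 for fixed integers a,b
   (so that phi(lam s, lam t) = (lam^a,lam^b).phi(s,t)), and phi(s,t) never
   lands in the unstable locus. *)
Definition P1_morphism n (w : 'I_n -> int * int) (om : int * int)
    (phi : 'I_n -> {mpoly K[2]}) : Prop :=
  exists (a b : int) (d : 'I_n -> nat),
    [/\ forall i, homog_of_deg (d i) (phi i),
        forall i, (d i)%:Z = a * (w i).1 + b * (w i).2
      & forall st : 'I_2 -> K, wp_point st ->
          semistable w om (fun i => (phi i).@[st])].

End ToricGIT.

(* The variety Y^l_k. Cox coordinates indexed                          *)
(*   0 = y1, 1 = y2, 2 = x1, 3 = x2, 4 = x3.                            *)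

Definition wY (k l : nat) (i : 'I_5) : int * int :=
  match val i with
  | 0 => ((1 : int), (0 : int))
  | 1 => ((0 : int), (1 : int))
  | 2 => ((0 : int), (1 : int))
  | 3 => ((1 : int), (l%:Z - k%:Z))
  | _ => ((0 : int), (k%:Z))
  end.

Definition omegaY : int * int := ((1 : int), (2 : int)).

Definition wP (k : nat) (j : 'I_3) : nat :=
  match val j with 0 => 1%N | 1 => 1%N | _ => k end.

Definition piY (K : fieldType) (x : 'I_5 -> K) : 'I_3 -> K :=
  fun j => match val j with
           | 0 => x (inord 1)
           | 1 => x (inord 2)
           | _ => x (inord 4)
           end.

Definition inX (K : fieldType) (k l : nat) (f : {mpoly K[5]})
    (x : 'I_5 -> K) : Prop :=
  semistable (wY k l) omegaY x /\ f.@[x] = 0.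

(* Conclusion for a given section f:
   (1) pi maps X onto P(1,1,k);
   (2) pi contracts exactly l disjoint rational curves: there are l pairwise
       distinct points q_1..q_l of P(1,1,k) such that the fibre of X over
       each q_j is a rational curve (image of a nonconstant morphism
       P^1 -> Y^l_k), and over every other point of P(1,1,k) the fibre of X
       is a single point. *)
Definition contraction_property (K : fieldType) (k l : nat)
    (f : {mpoly K[5]}) : Prop :=
  (forall q : 'I_3 -> K, wp_point q ->
     exists x, inX k l f x /\ wp_same (wP k) (piY x) q) /\
  exists (q : 'I_l -> 'I_3 -> K) (phi : 'I_l -> 'I_5 -> {mpoly K[2]}),
    [/\ forall j, wp_point (q j),
        forall j j', wp_same (wP k) (q j) (q j') -> j = j',
        forall j, P1_morphism (wY k l) omegaY (phi j) /\ exists st st' : 'I_2 -> K,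
            [/\ wp_point st, wp_point st' &
                ~ same_orbit (wY k l) (fun i => (phi j i).@[st])
                                      (fun i => (phi j i).@[st'])],
        forall j (x : 'I_5 -> K), semistable (wY k l) omegaY x ->
          ((inX k l f x /\ wp_same (wP k) (piY x) (q j)) <->
           exists st : 'I_2 -> K, wp_point st /\
             same_orbit (wY k l) (fun i => (phi j i).@[st]) x)
      & forall (p : 'I_3 -> K), wp_point p ->
          (forall j, ~ wp_same (wP k) p (q j)) ->
          forall x x', inX k l f x -> inX k l f x' ->
            wp_same (wP k) (piY x) p -> wp_same (wP k) (piY x') p ->
            same_orbit (wY k l) x x'].

(* A section of O(1,l) is f = y1 G + x2 H, where G and H are weighted homogeneous
   of degrees l and k in the coordinates (y2, x1, x3) of P(1,1,k); since l < k + 2,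
   H = a x3 + h(y2, x1).  Over a point p of P(1,1,k) the fibre of X is the locus
   y1 G(p) + x2 H(p) = 0 on the line with coordinates (y1 : x2): a single point unless
   G(p) = H(p) = 0, in which case it is the whole line, a contracted rational curve.
   When a <> 0 the curve H = 0 is a P^1, the graph of x3 = -h/a, and G restricts to it
   as a binary form B of degree l.  Hence G and H have exactly l common zeros as soon as
   a, the value of G at the point of H = 0 where x1 = 0, the leading coefficient of B
   and Res(B, B') are all nonzero.  Their product is a polynomial in the coefficients
   of f, and it does not vanish at y1 y2^l - y1 x1^l + x2 x3. *)

From HB Require Import structures.
From mathcomp Require Import all_boot all_order all_algebra all_field.
From mathcomp Require Import mpoly.
From mathcomp Require Import zify ring lra.
From Stdlib Require Import FunctionalExtensionality.
Set Implicit Arguments. Unset Strict Implicit. Unset Printing Implicit Defensive.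
Import Order.TTheory GRing.Theory Num.Theory.
Local Open Scope ring_scope.

Definition vec5 {T : Type} (a b c d e : T) : 'I_5 -> T :=
  fun i => match val i with 0 => a | 1 => b | 2 => c | 3 => d | _ => e end.
Definition vec3 {T : Type} (a b c : T) : 'I_3 -> T :=
  fun i => match val i with 0 => a | 1 => b | _ => c end.
Definition vec2 {T : Type} (a b : T) : 'I_2 -> T :=
  fun i => if val i == 0%N then a else b.

Section Coordinates.
Variable T : Type.
Implicit Types a b c d e : T.

Lemma vec5E a b c d e :
  (vec5 a b c d e ord0 = a) * (vec5 a b c d e (inord 1) = b) *
  (vec5 a b c d e (inord 2) = c) * (vec5 a b c d e (inord 3) = d) *
  (vec5 a b c d e (inord 4) = e).
Proof. by rewrite /vec5 /= !inordK. Qed.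

Lemma vec3E a b c :
  (vec3 a b c ord0 = a) * (vec3 a b c (inord 1) = b) * (vec3 a b c (inord 2) = c).
Proof. by rewrite /vec3 /= !inordK. Qed.

Lemma vec5_eta (x : 'I_5 -> T) :
  x = vec5 (x ord0) (x (inord 1)) (x (inord 2)) (x (inord 3)) (x (inord 4)).
Proof.
apply: functional_extensionality => -[[|[|[|[|[|i]]]]] Hi] //=;
  rewrite /vec5 /=; congr x; apply: val_inj; rewrite /= ?inordK //.
Qed.

Lemma vec3_eta (x : 'I_3 -> T) : x = vec3 (x ord0) (x (inord 1)) (x (inord 2)).
Proof.
apply: functional_extensionality => -[[|[|[|i]]] Hi] //=;
  rewrite /vec3 /=; congr x; apply: val_inj; rewrite /= ?inordK //.
Qed.

Lemma comp_vec5 (U : Type) (g : T -> U) a b c d e :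
  g \o vec5 a b c d e = vec5 (g a) (g b) (g c) (g d) (g e).
Proof. by apply: functional_extensionality => -[[|[|[|[|i]]]] Hi]. Qed.

End Coordinates.

Lemma big_ord5 (R : Type) (idx : R) (op : Monoid.law idx) (G : 'I_5 -> R) :
  \big[op/idx]_(i < 5) G i =
  op (op (op (op (G ord0) (G (inord 1))) (G (inord 2))) (G (inord 3))) (G (inord 4)).
Proof.
rewrite !big_ord_recl big_ord0 Monoid.mulm1 !Monoid.mulmA.
by congr (op (op (op (op _ _) _) _) _); congr G; apply: val_inj; rewrite /= inordK.
Qed.

Section Weights.
Variables k l : nat.

Lemma wYE :
  (wY k l ord0 = (1, 0)) * (wY k l (inord 1) = (0, 1)) * (wY k l (inord 2) = (0, 1)) *
  (wY k l (inord 3) = (1, l%:Z - k%:Z)) * (wY k l (inord 4) = (0, k%:Z)).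
Proof. by rewrite /wY /= !inordK. Qed.

Lemma wPE : (wP k ord0 = 1%N) * (wP k (inord 1) = 1%N) * (wP k (inord 2) = k).
Proof. by rewrite /wP /= !inordK. Qed.

End Weights.

Lemma meval_lincomb (R : comNzRingType) n (p : {mpoly R[n]}) (u v w : 'I_n -> R) (A B : R) :
  (forall m, m \in msupp p -> \prod_i u i ^+ m i =
     A * \prod_i v i ^+ m i + B * \prod_i w i ^+ m i) ->
  p.@[u] = A * p.@[v] + B * p.@[w].
Proof.
move=> mon_eq; rewrite !mevalE !mulr_sumr -big_split /=; apply: eq_big_seq => m m_supp.
by rewrite mon_eq //; ring.
Qed.

(* [f = y1 G(y2, x1, x3) + x2 H(y2, x1, x3)] for a section [f] (see [meval_section]). *)
Definition sectG (K : fieldType) (f : {mpoly K[5]}) (y x z : K) := f.@[vec5 1 y x 0 z].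
Definition sectH (K : fieldType) (f : {mpoly K[5]}) (y x z : K) := f.@[vec5 0 y x 1 z].

Section SectionsO1l.
Variables (K : fieldType) (k l : nat) (f : {mpoly K[5]}).
Hypothesis f_sec : is_section (wY k l) (1, l%:Z) f.

Lemma section_monomial m : m \in msupp f ->
  (m ord0 = 1 /\ m (inord 3) = 0 /\ m (inord 1) + m (inord 2) + k * m (inord 4) = l)%N \/
  (m ord0 = 0 /\ m (inord 3) = 1 /\ m (inord 1) + m (inord 2) + k * m (inord 4) = k)%N.
Proof.
move=> /f_sec; rewrite !big_ord5 !wYE /= => -[E1 E2].
have [E3|E3] : m (inord 3) = 0%N \/ m (inord 3) = 1%N by lia.
  by rewrite E3 in E1 E2; left; lia.
by rewrite E3 in E1 E2; right; lia.
Qed.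

Lemma meval_section a b c d e :
  f.@[vec5 a b c d e] = a * sectG f b c e + d * sectH f b c e.
Proof.
apply: meval_lincomb => m /section_monomial.
by rewrite !big_ord5 !vec5E /= => -[] [-> [-> _]]; rewrite ?expr0 ?expr1 ?expr1n; ring.
Qed.

Lemma sectG_homog t y x z :
  sectG f (t * y) (t * x) (t ^+ k * z) = t ^+ l * sectG f y x z.
Proof.
rewrite [LHS](@meval_lincomb _ _ f _ (vec5 1 y x 0 z) (vec5 1 y x 0 z) (t ^+ l) 0)
  ?mul0r ?addr0 // => m /section_monomial.
rewrite !big_ord5 !vec5E /= => -[] [-> [-> E]].
  by rewrite -E ?expr0 ?expr1 ?expr1n ?exprMn -?exprM ?exprD; ring.
by rewrite ?expr0 ?expr1 ?expr0n /=; ring.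
Qed.

Lemma sectH_homog t y x z :
  sectH f (t * y) (t * x) (t ^+ k * z) = t ^+ k * sectH f y x z.
Proof.
rewrite [LHS](@meval_lincomb _ _ f _ (vec5 0 y x 1 z) (vec5 0 y x 1 z) (t ^+ k) 0)
  ?mul0r ?addr0 // => m /section_monomial.
rewrite !big_ord5 !vec5E /= => -[] [-> [-> E]].
  by rewrite ?expr0 ?expr1 ?expr0n /=; ring.
by rewrite -{2}E ?expr0 ?expr1 ?expr1n ?exprMn -?exprM ?exprD; ring.
Qed.

Hypothesis k_gt0 : (0 < k)%N.

(* [H] has weighted degree [k], the weight of [x3]. *)
Lemma sectH_affine y x z : sectH f y x z = z * sectH f 0 0 1 + sectH f y x 0.
Proof.
rewrite [LHS](@meval_lincomb _ _ f _ (vec5 0 0 0 1 1) (vec5 0 y x 1 0) z 1) ?mul1r //.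
move=> m /section_monomial; rewrite !big_ord5 !vec5E /= => -[] [-> [-> E]].
  by rewrite ?expr0 ?expr1 ?expr0n /=; ring.
have [E4|E4] : (m (inord 4) = 0 \/ m (inord 4) = 1)%N by nia.
  have [E1|E1] : (0 < m (inord 1) \/ 0 < m (inord 2))%N by lia.
    by rewrite E4 ?expr0 ?expr1 ?expr1n (expr0n _ (m (inord 1))) (gtn_eqF E1) /=; ring.
  by rewrite E4 ?expr0 ?expr1 ?expr1n (expr0n _ (m (inord 2))) (gtn_eqF E1) /=; ring.
have [-> ->] : (m (inord 1) = 0 /\ m (inord 2) = 0)%N by lia.
by rewrite E4 ?expr0 ?expr1 ?expr1n ?expr0n /=; ring.
Qed.

End SectionsO1l.

Section Orbits.
Variables (K : fieldType) (k l : nat).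

Lemma same_orbitP (x y : 'I_5 -> K) :
  same_orbit (wY k l) x y <->
  exists t1 t2 : K, [/\ t1 != 0, t2 != 0 &
    y = vec5 (t1 * x ord0) (t2 * x (inord 1)) (t2 * x (inord 2))
             (t1 * t2 ^ (l%:Z - k%:Z) * x (inord 3)) (t2 ^+ k * x (inord 4))].
Proof.
suff act_x t1 t2 : torus_act (wY k l) t1 t2 x =
    vec5 (t1 * x ord0) (t2 * x (inord 1)) (t2 * x (inord 2))
         (t1 * t2 ^ (l%:Z - k%:Z) * x (inord 3)) (t2 ^+ k * x (inord 4)).
  by split=> -[t1 [t2 [t1_neq0 t2_neq0 ->]]]; exists t1, t2; rewrite act_x.
rewrite {1}(vec5_eta x).
apply: functional_extensionality => -[[|[|[|[|[|i]]]]] Hi] //=;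
  by rewrite /torus_act /vec5 /= ?expr1z ?expr0z ?mulr1 ?mul1r.
Qed.

Lemma semistable_wY (x : 'I_5 -> K) : (0 < k)%N -> (l < k + 2)%N ->
  semistable (wY k l) omegaY x <->
  ((x ord0 != 0) || (x (inord 3) != 0)) &&
  ((x (inord 1) != 0) || (x (inord 2) != 0) || (x (inord 4) != 0)).
Proof.
move=> k_gt0 lk2.
have wsums (c : 'I_5 -> rat) :
  (\sum_i c i * ((wY k l i).1)%:~R = c ord0 + c (inord 3)) /\
  (\sum_i c i * ((wY k l i).2)%:~R = c (inord 1) + c (inord 2) +
     c (inord 3) * (l%:R - k%:R) + c (inord 4) * k%:R).
  by rewrite !big_ord5 !wYE /= intrB; split; ring.
have kR : (k%:R : rat) != 0 by rewrite pnatr_eq0 -lt0n.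
have lkR : (l%:R : rat) <= k%:R + 1 by rewrite natr1 ler_nat; lia.
split=> [[c [c_ge0 c_supp s1 s2]]|].
  have [E1 E2] := wsums c; rewrite E1 {}E2 /omegaY /= in s1 s2.
  apply/andP; split; apply: contraT; rewrite !negb_or !negbK.
    case/andP=> /eqP/c_supp c0 /eqP/c_supp c3.
    by move: s1; rewrite c0 c3 addr0 => /eqP; rewrite eq_sym oner_eq0.
  case/andP=> /andP[/eqP/c_supp c1 /eqP/c_supp c2] /eqP/c_supp c4.
  move: s2; rewrite c1 c2 c4 !mul0r !add0r addr0 => s2.
  by have := c_ge0 ord0; have := c_ge0 (inord 3); nra.
rewrite (vec5_eta x) !vec5E.
set x0 := x ord0; set x1 := x (inord 1); set x2 := x (inord 2);
set x3 := x (inord 3); set x4 := x (inord 4).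
(* [omega] is [w0 + 2 w1] and [w3 + (k + 2 - l) w1], with [w1 = w2 = w4 / k]. *)
pose d := (k%:R + 2 - l%:R : rat).
case/andP=> /orP[] H03 /orP[/orP[]|] H124;
  [ exists (vec5 1 2 0 0 0) | exists (vec5 1 0 2 0 0) | exists (vec5 1 0 0 0 (2 / k%:R))
  | exists (vec5 0 d 0 1 0) | exists (vec5 0 0 d 1 0) | exists (vec5 0 0 0 1 (d / k%:R)) ];
  (split; [ case=> -[|[|[|[|[|i]]]]] Hi; rewrite /vec5 /d /= ?divr_ge0 ?ler0n //; lra
          | case=> -[|[|[|[|[|i]]]]] Hi //= E; rewrite /vec5 /= in E;
            by move: H03 H124; rewrite E eqxx
          | by rewrite (proj1 (wsums _)) !vec5E /omegaY /=; ring
          | by rewrite (proj2 (wsums _)) !vec5E /d /omegaY /=; field ]).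
Qed.

End Orbits.

Lemma wp_point2P (K : fieldType) (s : 'I_2 -> K) :
  wp_point s <-> (s ord0 != 0) || (s ord_max != 0).
Proof.
split=> [[i]|/orP[] s_neq0]; [|by exists ord0|by exists ord_max].
case: i => -[|[|i]] Hi // s_neq0; apply/orP.
  by left; rewrite (_ : ord0 = Ordinal Hi) //; apply: val_inj.
by right; rewrite (_ : ord_max = Ordinal Hi) //; apply: val_inj.
Qed.

Lemma wp_point3P (K : fieldType) (p : 'I_3 -> K) :
  wp_point p <-> (p ord0 != 0) || (p (inord 1) != 0) || (p (inord 2) != 0).
Proof.
split=> [[i]|/orP[/orP[]|] p_neq0]; last 3 first.
- by exists ord0.
- by exists (inord 1).
- by exists (inord 2).
rewrite {1}(vec3_eta p) /vec3; case: i => -[|[|[|i]]] Hi //= ->; by rewrite ?orbT.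
Qed.

Lemma wp_sameP (K : fieldType) k (p q : 'I_3 -> K) :
  wp_same (wP k) p q <->
  exists2 t, t != 0 & [/\ q ord0 = t * p ord0, q (inord 1) = t * p (inord 1)
                        & q (inord 2) = t ^+ k * p (inord 2)].
Proof.
split=> [[t [t_neq0 ->]]|[t t_neq0 [q0 q1 q2]]].
  by exists t => //; rewrite !wPE !expr1.
exists t; split => //; rewrite (vec3_eta q) q0 q1 q2 (vec3_eta p) !vec3E.
by apply: functional_extensionality => -[[|[|[|i]]] Hi]; rewrite /vec3 /wP /= ?expr1.
Qed.

Lemma piY_vec5 (K : fieldType) (a b c d e : K) : piY (vec5 a b c d e) = vec3 b c e.
Proof. by apply: functional_extensionality => -[[|[|[|i]]] Hi]; rewrite /piY /vec3 /= !vec5E. Qed.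

Lemma piY_eta (K : fieldType) (x : 'I_5 -> K) :
  piY x = vec3 (x (inord 1)) (x (inord 2)) (x (inord 4)).
Proof. by rewrite {1}(vec5_eta x) piY_vec5. Qed.

Lemma exprz_subn_mulXn (K : fieldType) k l (t : K) : t != 0 ->
  t ^ (l%:Z - k%:Z) * t ^+ k = t ^+ l.
Proof. by move=> t_neq0; rewrite (_ : t ^+ k = t ^ k%:Z) // -expfzDr // subrK. Qed.

Lemma proportional_in_ker_form2 (K : fieldType) (al be u0 u1 w0 w1 : K) :
  (al != 0) || (be != 0) -> (u0 != 0) || (u1 != 0) -> (w0 != 0) || (w1 != 0) ->
  al * u0 + be * u1 = 0 -> al * w0 + be * w1 = 0 ->
  exists2 t, t != 0 & w0 = t * u0 /\ w1 = t * u1.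
Proof.
move=> ab_neq0 u_neq0 w_neq0 Eu Ew.
have [be0|be_neq0] := eqVneq be 0.
  have al_neq0 : al != 0 by move: ab_neq0; rewrite be0 eqxx orbF.
  have [u00 w00] : u0 = 0 /\ w0 = 0.
    move/eqP: Eu; move/eqP: Ew; rewrite be0 !mul0r !addr0 !mulf_eq0 (negbTE al_neq0).
    by move=> /eqP-> /eqP->.
  rewrite u00 w00 eqxx /= in u_neq0 w_neq0.
  by exists (w1 / u1); rewrite ?mulf_neq0 ?invr_eq0 // u00 w00 mulr0 divfK.
have u1E : u1 = - al * u0 / be.
  by apply: (mulIf be_neq0); rewrite divfK // -[RHS]addr0 -Eu; ring.
have w1E : w1 = - al * w0 / be.
  by apply: (mulIf be_neq0); rewrite divfK // -[RHS]addr0 -Ew; ring.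
have u0_neq0 : u0 != 0.
  by apply: contraTneq u_neq0 => u00; rewrite u1E u00 !(mulr0, mul0r) eqxx.
have w0_neq0 : w0 != 0.
  by apply: contraTneq w_neq0 => w00; rewrite w1E w00 !(mulr0, mul0r) eqxx.
exists (w0 / u0); rewrite ?mulf_neq0 ?invr_eq0 // divfK // u1E w1E; split=> //; field.
by apply/andP.
Qed.

Definition fibre_line (K : fieldType) (r z : K) : 'I_5 -> {mpoly K[2]} :=
  vec5 'X_ord0 r%:MP 1 'X_ord_max z%:MP.

Lemma meval_fibre_line (K : fieldType) (r z : K) (s : 'I_2 -> K) :
  (fun i => (fibre_line r z i).@[s]) = vec5 (s ord0) r 1 (s ord_max) z.
Proof.
apply: functional_extensionality => -[[|[|[|[|[|i]]]]] Hi];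
  by rewrite /fibre_line /vec5 /= ?mevalXU ?mevalC ?meval1.
Qed.

Section FibreLine.
Variables (K : fieldType) (k l : nat) (r z : K).

Lemma fibre_line_P1_morphism : (0 < k)%N -> (l < k + 2)%N ->
  P1_morphism (wY k l) omegaY (fibre_line r z).
Proof.
move=> k_gt0 lk2; exists 1, 0, (vec5 1 0 0 1 0)%N; split.
- move=> -[[|[|[|[|[|i]]]]] Hi] m;
    rewrite /fibre_line /vec5 /= ?msuppX ?msuppC ?msupp1 ?inE;
    try (by move/eqP => ->; rewrite mdeg1);
    try (by case: ifP => _; rewrite ?inE // => /eqP ->; rewrite mdeg0);
    by move/eqP => ->; rewrite mdeg0.
- by move=> -[[|[|[|[|[|i]]]]] Hi]; rewrite /wY /vec5 /= ?mul1r ?mul0r ?addr0.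
- move=> s /wp_point2P s_neq0; rewrite meval_fibre_line semistable_wY //.
  by rewrite !vec5E oner_neq0 !orbT andbT.
Qed.

Lemma fibre_line_nonconst : exists s s' : 'I_2 -> K,
  [/\ wp_point s, wp_point s' &
      ~ same_orbit (wY k l) (fun i => (fibre_line r z i).@[s])
                            (fun i => (fibre_line r z i).@[s'])].
Proof.
exists (vec2 1 0), (vec2 0 1); split.
- by apply/wp_point2P; rewrite /vec2 /= oner_neq0.
- by apply/wp_point2P; rewrite /vec2 /= oner_neq0 orbT.
- rewrite !meval_fibre_line => /same_orbitP [t1 [t2 [t1_neq0 _ E]]].
  have := congr1 (fun x => x ord0) E; rewrite !vec5E /vec2 /= mulr1 => t1_eq0.
  by move: t1_neq0; rewrite -t1_eq0 eqxx.
Qed.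

End FibreLine.

Section Fibres.
Variables (K : fieldType) (k l : nat) (f : {mpoly K[5]}).
Hypotheses (k_gt0 : (0 < k)%N) (lk2 : (l < k + 2)%N).
Hypothesis f_sec : is_section (wY k l) (1, l%:Z) f.

(* Over [q], [X] is cut out by [y1 G(q) + x2 H(q) = 0] on the line of the [(y1, x2)]. *)
Lemma piY_inX_surj (q : 'I_3 -> K) : wp_point q ->
  exists x, inX k l f x /\ wp_same (wP k) (piY x) q.
Proof.
move=> /wp_point3P q_neq0.
set g := sectG f (q ord0) (q (inord 1)) (q (inord 2)).
set h := sectH f (q ord0) (q (inord 1)) (q (inord 2)).
pose y := if (g == 0) && (h == 0) then (1, 0) else (h, - g).
exists (vec5 y.1 (q ord0) (q (inord 1)) y.2 (q (inord 2))); split; last first.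
  exists 1; split; first exact: oner_neq0.
  by rewrite piY_vec5 {1}(vec3_eta q); apply: functional_extensionality => i; rewrite expr1n mul1r.
split.
  rewrite semistable_wY // !vec5E q_neq0 andbT /y.
  by case: ifP => [_|/negbT]; rewrite ?oner_neq0 // negb_and oppr_eq0 orbC.
by rewrite (meval_section f_sec) -/g -/h /y; case: ifP => [/andP[/eqP-> /eqP->]|_] /=; ring.
Qed.

Lemma same_orbit_in_fibre (p : 'I_3 -> K) (x x' : 'I_5 -> K) :
  (sectG f (p ord0) (p (inord 1)) (p (inord 2)) != 0) ||
  (sectH f (p ord0) (p (inord 1)) (p (inord 2)) != 0) ->
  inX k l f x -> inX k l f x' ->
  wp_same (wP k) (piY x) p -> wp_same (wP k) (piY x') p -> same_orbit (wY k l) x x'.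
Proof.
move=> gh_p [x_st fx] [x'_st fx'].
rewrite !piY_eta => /wp_sameP[t t_neq0 [p0 p1 p2]] /wp_sameP[t' t'_neq0 [p0' p1' p2']].
rewrite !vec3E in p0 p1 p2 p0' p1' p2'.
move/semistable_wY: x_st => /(_ k_gt0 lk2) /andP[x03 _].
move/semistable_wY: x'_st => /(_ k_gt0 lk2) /andP[x'03 _].
pose mu := t / t'.
have mu_neq0 : mu != 0 by rewrite mulf_neq0 ?invr_eq0.
have x'1E : x' (inord 1) = mu * x (inord 1) by apply: (mulfI t'_neq0); rewrite -p0' p0 /mu; field.
have x'2E : x' (inord 2) = mu * x (inord 2) by apply: (mulfI t'_neq0); rewrite -p1' p1 /mu; field.
have x'4E : x' (inord 4) = mu ^+ k * x (inord 4).
  apply: (mulfI (expf_neq0 k t'_neq0)); rewrite -p2' p2 /mu expr_div_n; field.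
  by rewrite expf_neq0.
set g := sectG f (x (inord 1)) (x (inord 2)) (x (inord 4)).
set h := sectH f (x (inord 1)) (x (inord 2)) (x (inord 4)).
have gh : (mu ^+ l * g != 0) || (mu ^+ k * h != 0).
  move: gh_p; rewrite p0 p1 p2 (sectG_homog f_sec) (sectH_homog f_sec).
  by rewrite !mulf_eq0 !expf_eq0 (negbTE t_neq0) (negbTE mu_neq0) !andbF.
set e := mu ^ (l%:Z - k%:Z).
have e_neq0 : e != 0 by rewrite expfz_neq0.
have [s s_neq0 [x'0E x'3E]] : exists2 s, s != 0 &
    x' ord0 = s * x ord0 /\ x' (inord 3) = s * (e * x (inord 3)).
  apply: (proportional_in_ker_form2 gh) => //.
  - by rewrite mulf_eq0 negb_or e_neq0.
  - have fxE : x ord0 * g + x (inord 3) * h = 0.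
      by rewrite -fx {3}(vec5_eta x) (meval_section f_sec).
    by rewrite -(exprz_subn_mulXn k l mu_neq0) -/e -[RHS](mulr0 (e * mu ^+ k)) -fxE; ring.
  - rewrite -fx' {3}(vec5_eta x') (meval_section f_sec) x'1E x'2E x'4E.
    by rewrite (sectG_homog f_sec) (sectH_homog f_sec); ring.
apply/same_orbitP; exists s, mu; split => //.
by rewrite {1}(vec5_eta x') x'0E x'3E x'1E x'2E x'4E mulrA.
Qed.

Lemma fibre_over_common_zero (r z : K) :
  sectG f r 1 z = 0 -> sectH f r 1 z = 0 ->
  forall x, semistable (wY k l) omegaY x ->
    (inX k l f x /\ wp_same (wP k) (piY x) (vec3 r 1 z)) <->
    exists s : 'I_2 -> K, wp_point s /\ same_orbit (wY k l) (fun i => (fibre_line r z i).@[s]) x.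
Proof.
move=> Gz Hz x x_st; split.
  move=> [_ /wp_sameP[t t_neq0]]; rewrite !vec3E piY_eta !vec3E => -[rE oneE zE].
  move/semistable_wY: x_st => /(_ k_gt0 lk2) /andP[x03 _].
  have x2_neq0 : x (inord 2) != 0 by apply: contra_eq_neq oneE => ->; rewrite mulr0 oner_neq0.
  set e := x (inord 2) ^ (l%:Z - k%:Z).
  have e_neq0 : e != 0 by rewrite expfz_neq0.
  exists (vec2 (x ord0) (x (inord 3) / e)); split.
    by apply/wp_point2P; rewrite /vec2 /= mulf_eq0 invr_eq0 (negbTE e_neq0) orbF.
  rewrite meval_fibre_line; apply/same_orbitP; exists 1, (x (inord 2)); split => //.
    exact: oner_neq0.
  rewrite {1}(vec5_eta x) /vec2 /= !vec5E -/e; congr vec5.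
  - by rewrite mul1r.
  - by rewrite rE mulrA (mulrC _ t) -oneE mul1r.
  - by rewrite mulr1.
  - by rewrite mul1r mulrC mulfVK.
  - by rewrite zE mulrA -exprMn (mulrC _ t) -oneE expr1n mul1r.
move=> [s [_]]; rewrite meval_fibre_line => /same_orbitP[t1 [t2 [t1_neq0 t2_neq0 xE]]].
split; first split => //; rewrite xE !vec5E.
  by rewrite (meval_section f_sec) (sectG_homog f_sec) (sectH_homog f_sec) Gz Hz !mulr0 addr0.
rewrite piY_vec5; apply/wp_sameP; exists t2^-1; rewrite ?invr_eq0 // !vec3E exprVn.
by split; field; rewrite ?expf_neq0.
Qed.

End Fibres.

(* A polynomial in the Cox coordinates is encoded by a vector [c] of coefficients on a
   list [ms] of monomials.  Stating the genericity condition for coefficients in an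
   arbitrary ring lets us instantiate [c] with the variables ['X_j] (see [disc_mpoly]). *)
Definition eval_coefs (S : comNzRingType) n N (ms : 'I_N -> 'X_{1..n}) (c : 'I_N -> S)
    (h : 'I_n -> S) : S :=
  \sum_(j < N) c j * \prod_(i < n) h i ^+ ms j i.

Lemma rmorph_eval_coefs (S T : comNzRingType) (g : {rmorphism S -> T}) n N
    (ms : 'I_N -> 'X_{1..n}) (c : 'I_N -> S) (h : 'I_n -> S) :
  g (eval_coefs ms c h) = eval_coefs ms (g \o c) (g \o h).
Proof.
rewrite rmorph_sum; apply: eq_bigr => j _.
by rewrite rmorphM rmorph_prod; congr (_ * _); apply: eq_bigr => i _; rewrite rmorphXn.
Qed.

Lemma map_poly_eval_coefs (S T : comNzRingType) (g : {rmorphism S -> T}) n N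
    (ms : 'I_N -> 'X_{1..n}) (c : 'I_N -> S) (h : 'I_n -> {poly S}) :
  map_poly g (eval_coefs ms (fun j => (c j)%:P) h) =
  eval_coefs ms (fun j => (g (c j))%:P) (map_poly g \o h).
Proof.
rewrite (rmorph_eval_coefs (map_poly g)); congr eval_coefs.
by apply: functional_extensionality => j /=; rewrite map_polyC.
Qed.

Lemma horner_eval_coefs (S : comNzRingType) n N (ms : 'I_N -> 'X_{1..n}) (c : 'I_N -> S)
    (h : 'I_n -> {poly S}) (y : S) :
  (eval_coefs ms (fun j => (c j)%:P) h).[y] = eval_coefs ms c (fun i => (h i).[y]).
Proof.
rewrite horner_sum; apply: eq_bigr => j _; rewrite hornerM hornerC horner_prod.
by congr (_ * _); apply: eq_bigr => i _; rewrite horner_exp.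
Qed.

(* Unlike [Sylvester_mx], the dimensions do not depend on the sizes of [p] and [q],
   so that the determinant commutes with ring morphisms. *)
Definition sylvester_mxn (S : nzRingType) (dp dq : nat) (p q : {poly S}) : 'M[S]_(dq + dp) :=
  \matrix_(i, j) match split i with
                 | inl i' => p`_(j - i') *+ (i' <= j)%N
                 | inr i' => q`_(j - i') *+ (i' <= j)%N end.

Lemma resultant_sylvester_mxn (S : nzRingType) (p q : {poly S}) :
  resultant p q = \det (sylvester_mxn (size p).-1 (size q).-1 p q).
Proof. by congr (\det _); apply/matrixP => i j; rewrite Sylvester_mxE mxE. Qed.

Lemma rmorph_det_sylvester_mxn (S T : comNzRingType) (g : {rmorphism S -> T}) dp dq p q :
  g (\det (sylvester_mxn dp dq p q)) =
  \det (sylvester_mxn dp dq (map_poly g p) (map_poly g q)).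
Proof.
rewrite -det_map_mx; congr (\det _); apply/matrixP => i j.
by rewrite !mxE; case: (split i) => i'; rewrite rmorphMn coef_map.
Qed.

Section CoefficientForms.
Variables (k l N : nat) (ms : 'I_N -> 'X_{1..5}).

Definition cf_a (S : comNzRingType) (c : 'I_N -> S) : S := eval_coefs ms c (vec5 0 0 0 1 1).
Definition cf_hinf (S : comNzRingType) (c : 'I_N -> S) : S := eval_coefs ms c (vec5 0 1 0 1 0).
Definition cf_h (S : comNzRingType) (c : 'I_N -> S) : {poly S} :=
  eval_coefs ms (fun j => (c j)%:P) (vec5 0 'X 1 1 0).
(* With [a := H(0,0,1)] and [h(y) := H(y,1,0)], [cf_B c] is [a^l G(y, 1, - h(y)/a)],
   the restriction of [G] to the curve [H = 0] with denominators cleared, and [cf_Binf c]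
   is [a^l G(1, 0, - H(1,0,0)/a)], the value of [G] at the point of [H = 0] where [x1 = 0]. *)
Definition cf_B (S : comNzRingType) (c : 'I_N -> S) : {poly S} :=
  eval_coefs ms (fun j => (c j)%:P)
    (vec5 1 ((cf_a c)%:P * 'X) (cf_a c)%:P 0 (- ((cf_a c) ^+ k.-1)%:P * cf_h c)).
Definition cf_Binf (S : comNzRingType) (c : 'I_N -> S) : S :=
  eval_coefs ms c (vec5 1 (cf_a c) 0 0 (- cf_a c ^+ k.-1 * cf_hinf c)).
Definition cf_disc (S : comNzRingType) (c : 'I_N -> S) : S :=
  cf_a c * cf_Binf c * (cf_B c)`_l * \det (sylvester_mxn l l.-1 (cf_B c) (cf_B c)^`()).

Variables (S T : comNzRingType) (g : {rmorphism S -> T}) (c : 'I_N -> S).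

Lemma rmorph_cf_a : g (cf_a c) = cf_a (g \o c).
Proof. by rewrite /cf_a rmorph_eval_coefs comp_vec5 rmorph0 rmorph1. Qed.

Lemma rmorph_cf_hinf : g (cf_hinf c) = cf_hinf (g \o c).
Proof. by rewrite /cf_hinf rmorph_eval_coefs comp_vec5 rmorph0 rmorph1. Qed.

Lemma map_poly_cf_h : map_poly g (cf_h c) = cf_h (g \o c).
Proof. by rewrite /cf_h map_poly_eval_coefs comp_vec5 rmorph0 rmorph1 map_polyX. Qed.

Lemma map_poly_cf_B : map_poly g (cf_B c) = cf_B (g \o c).
Proof.
rewrite /cf_B map_poly_eval_coefs comp_vec5 rmorph0 rmorph1 !rmorphM rmorphN /=.
by rewrite map_polyX map_poly_cf_h !map_polyC /= rmorphXn rmorph_cf_a.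
Qed.

Lemma rmorph_cf_Binf : g (cf_Binf c) = cf_Binf (g \o c).
Proof.
rewrite /cf_Binf rmorph_eval_coefs comp_vec5 rmorph0 rmorph1 rmorphM rmorphN rmorphXn.
by rewrite rmorph_cf_a rmorph_cf_hinf.
Qed.

Lemma rmorph_cf_disc : g (cf_disc c) = cf_disc (g \o c).
Proof.
rewrite /cf_disc !rmorphM rmorph_cf_a rmorph_cf_Binf rmorph_det_sylvester_mxn.
by rewrite -coef_map -deriv_map map_poly_cf_B.
Qed.

End CoefficientForms.

Definition disc_mpoly (K : fieldType) k l N (ms : 'I_N -> 'X_{1..5}) : {mpoly K[N]} :=
  cf_disc k l ms (fun j => 'X_j).

Lemma meval_disc_mpoly (K : fieldType) k l N (ms : 'I_N -> 'X_{1..5}) (v : 'I_N -> K) :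
  (disc_mpoly K k l ms).@[v] = cf_disc k l ms v.
Proof.
rewrite /disc_mpoly (rmorph_cf_disc k l ms (meval v)); congr cf_disc.
by apply: functional_extensionality => j /=; rewrite mevalXU.
Qed.

Lemma size_mul_leqS (R : nzRingType) (p q : {poly R}) a b :
  (size p <= a.+1)%N -> (size q <= b.+1)%N -> (size (p * q)%R <= (a + b).+1)%N.
Proof. by move=> p_le q_le; have := size_polyMleq p q; lia. Qed.

Lemma size_exp_leqS (R : nzRingType) (p : {poly R}) a n :
  (size p <= a.+1)%N -> (size (p ^+ n)%R <= (a * n).+1)%N.
Proof.
move=> p_le; have := size_poly_exp_leq p n.
have : ((size p).-1 * n <= a * n)%N by rewrite leq_mul2r; lia.
lia.
Qed.

Lemma size_mmap_polyC_leq (K : fieldType) n (p : {mpoly K[n]}) (h : 'I_n -> {poly K}) d :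
  (forall m, m \in msupp p -> (size (mmap1 h m) <= d)%N) ->
  (size (mmap polyC h p) <= d)%N.
Proof.
move=> mon_le; apply: (leq_trans (size_sum _ _ _)).
apply/bigmax_leqP_seq => m m_supp _; rewrite mul_polyC.
exact: leq_trans (size_scale_leq _ _) (mon_le m m_supp).
Qed.

(* Coefficient vectors on all monomials of total degree at most [l + k + 1],
   which contain the supports of all sections of [O(1, l)]. *)
Definition nmon (k l : nat) := #|{: 'X_{1..5 < (l + k).+2}}|.
Definition mon_enum (k l : nat) (j : 'I_(nmon k l)) : 'X_{1..5} := bmnm (enum_val j).
Arguments mon_enum : clear implicits.
Definition coef_vec (K : fieldType) (k l : nat) (f : {mpoly K[5]}) (j : 'I_(nmon k l)) : K :=
  f@_(mon_enum k l j).
Arguments coef_vec {K} k l f j.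

Section CoefficientVector.
Variables (K : fieldType) (k l : nat) (f : {mpoly K[5]}).
Hypothesis k_gt0 : (0 < k)%N.
Hypothesis f_sec : is_section (wY k l) (1, l%:Z) f.

Lemma msize_section : (msize f <= (l + k).+2)%N.
Proof.
rewrite msizeE; apply/bigmax_leqP_seq => m /(section_monomial f_sec) m_sec _.
by rewrite mdegE big_ord5 /=; case: m_sec => -[-> [-> E]]; nia.
Qed.

Lemma eval_coefs_section (S : comNzRingType) (g : {rmorphism K -> S}) (h : 'I_5 -> S) :
  eval_coefs (mon_enum k l) (g \o coef_vec k l f) h = mmap g h f.
Proof.
rewrite (mmapE _ msize_section) /eval_coefs /nmon.
rewrite -(big_enum_val (A := {: 'X_{1..5 < (l + k).+2}}) (fun m => g f@_m * mmap1 h m)).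
by apply: eq_big => [m|j _] //; rewrite inE.
Qed.

Lemma meval_coefs_section (h : 'I_5 -> K) :
  eval_coefs (mon_enum k l) (coef_vec k l f) h = f.@[h].
Proof. exact: (eval_coefs_section idfun). Qed.

Let ms := mon_enum k l.
Let c := coef_vec k l f.

Lemma cf_a_section : cf_a ms c = sectH f 0 0 1.
Proof. exact: meval_coefs_section. Qed.

Lemma cf_Binf_section :
  cf_Binf k ms c = sectG f (sectH f 0 0 1) 0 (- sectH f 0 0 1 ^+ k.-1 * sectH f 1 0 0).
Proof. by rewrite /cf_Binf /cf_hinf !meval_coefs_section cf_a_section. Qed.

Lemma horner_cf_h y : (cf_h ms c).[y] = sectH f y 1 0.
Proof.
rewrite horner_eval_coefs meval_coefs_section; congr meval.
by apply: functional_extensionality => -[[|[|[|[|[|i]]]]] Hi]; rewrite /vec5 /= ?hornerC ?hornerX.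
Qed.

Lemma horner_cf_B y :
  (cf_B k ms c).[y] = sectG f (sectH f 0 0 1 * y) (sectH f 0 0 1)
                              (- sectH f 0 0 1 ^+ k.-1 * sectH f y 1 0).
Proof.
rewrite horner_eval_coefs meval_coefs_section cf_a_section; congr meval.
apply: functional_extensionality => -[[|[|[|[|[|i]]]]] Hi];
  by rewrite /vec5 /= ?hornerE ?horner_cf_h.
Qed.

Lemma size_cf_h : (size (cf_h ms c) <= k.+1)%N.
Proof.
rewrite /cf_h (eval_coefs_section polyC); apply: size_mmap_polyC_leq => m.
rewrite /mmap1 big_ord5 !vec5E /= => /(section_monomial f_sec) [] [-> [-> E]].
  by rewrite expr1 !mul0r size_poly0.
rewrite expr0 !expr1n !mul1r !mulr1.
case: (m (inord 4)) E => [|n] E; last by rewrite expr0n /= mulr0 size_poly0.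
by rewrite expr0 mulr1 size_polyXn ltnS; lia.
Qed.

Lemma size_cf_B : (size (cf_B k ms c) <= l.+1)%N.
Proof.
rewrite /cf_B (eval_coefs_section polyC); apply: size_mmap_polyC_leq => m.
rewrite /mmap1 big_ord5 !vec5E /= => /(section_monomial f_sec) [] [-> [-> E]]; last first.
  by rewrite expr1 !mulr0 mul0r size_poly0.
rewrite expr0 !expr1n !mul1r mulr1 -polyCN.
have X_le : (size ('X : {poly K}) <= 1.+1)%N by rewrite size_polyX.
have aX := size_mul_leqS (size_polyC_leq1 (cf_a ms c)) X_le.
have Ch := size_mul_leqS (size_polyC_leq1 (- cf_a ms c ^+ k.-1)) size_cf_h.
have := size_mul_leqS (size_mul_leqS (size_exp_leqS (m (inord 1)) aX)
                         (size_exp_leqS (m (inord 2)) (size_polyC_leq1 (cf_a ms c))))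
                      (size_exp_leqS (m (inord 4)) Ch).
by move/leq_trans; apply; rewrite ltnS; lia.
Qed.

End CoefficientVector.

Lemma distinct_roots_of_sylvester (K : closedFieldType) (K0 : [pchar K] =i pred0) l
    (B : {poly K}) :
  (0 < l)%N -> (size B <= l.+1)%N -> B`_l != 0 ->
  \det (sylvester_mxn l l.-1 B B^`()) != 0 ->
  exists rs : seq K, [/\ uniq rs, size rs = l & forall y, root B y = (y \in rs)].
Proof.
move=> l_gt0 B_le Bl_neq0 det_neq0.
have B_size : size B = l.+1.
  apply/eqP; rewrite eqn_leq B_le /= ltnNge; apply: contra Bl_neq0 => B_lt.
  by rewrite nth_default.
have B_neq0 : B != 0 by rewrite -size_poly_eq0 B_size.
have B'_size : size B^`() = l.
  apply/eqP; rewrite eqn_leq; apply/andP; split.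
    by have := lt_size_deriv B_neq0; rewrite B_size.
  have B'l : B^`()`_l.-1 != 0.
    rewrite coef_deriv prednK // -mulr_natr mulf_neq0 //.
    by move/pcharf0P: K0 => ->; rewrite -lt0n.
  rewrite -(prednK l_gt0) ltnNge; apply: contra B'l => B'_lt.
  by rewrite nth_default.
have coprime_B : coprimep B B^`().
  have : resultant B B^`() != 0 by rewrite resultant_sylvester_mxn B_size B'_size.
  rewrite resultant_eq0 -leqNgt /coprimep => gcd_le; rewrite eqn_leq gcd_le lt0n size_poly_eq0.
  by rewrite gcdp_eq0 negb_and B_neq0.
have [rs Brs] := closed_field_poly_normal B.
have lcB_neq0 : lead_coef B != 0 by rewrite lead_coef_eq0.
exists rs; split.
- rewrite -separable_prod_XsubC -(eqp_separable (eqp_scale _ lcB_neq0)) -Brs.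
  by rewrite unlock.
- by move: B_size; rewrite Brs size_scale // size_prod_XsubC => -[].
- by move=> y; rewrite Brs rootZ // root_prod_XsubC.
Qed.

Section GenericSection.
Variables (K : fieldType) (k l : nat) (f : {mpoly K[5]}).
Hypotheses (k_gt0 : (0 < k)%N) (lk2 : (l < k + 2)%N).
Hypothesis f_sec : is_section (wY k l) (1, l%:Z) f.

Let a := sectH f 0 0 1.
Hypothesis a_neq0 : a != 0.
Hypothesis Binf_neq0 : sectG f a 0 (- a ^+ k.-1 * sectH f 1 0 0) != 0.
(* Since [a != 0], the curve [H = 0] of [P(1,1,k)] is the graph of [x3 = z y]
   over [(y2 : x1) = (y : 1)], plus the point [(1 : 0 : - H(1,0,0) / a)]. *)
Let z y := - sectH f y 1 0 / a.
Variable rs : seq K.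
Hypothesis rs_roots : forall y, (y \in rs) = (sectG f y 1 (z y) == 0).

Lemma sectH_graph y : sectH f y 1 (z y) = 0.
Proof. by rewrite (sectH_affine f_sec k_gt0) -/a /z; field. Qed.

Lemma common_zero_over_root (p0 p1 p2 : K) : (p0 != 0) || (p1 != 0) || (p2 != 0) ->
  sectG f p0 p1 p2 = 0 -> sectH f p0 p1 p2 = 0 ->
  exists2 y, y \in rs & wp_same (wP k) (vec3 p0 p1 p2) (vec3 y 1 (z y)).
Proof.
move=> p_neq0 Gp Hp.
have Hp_aff := sectH_affine f_sec k_gt0 p0 p1 p2; rewrite -/a Hp in Hp_aff.
have [p10|p1_neq0] := eqVneq p1 0.
  have H00 : sectH f p0 0 0 = p0 ^+ k * sectH f 1 0 0.
    by rewrite -(sectH_homog f_sec) mulr1 !mulr0.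
  rewrite p10 H00 in Hp_aff.
  have [p00|p0_neq0] := eqVneq p0 0.
    move: Hp_aff; rewrite p00 expr0n gtn_eqF // mul0r addr0 => /esym/eqP.
    by rewrite mulf_eq0 (negbTE a_neq0) orbF => /eqP p20; move: p_neq0; rewrite p00 p10 p20 eqxx.
  (* [p] would be the point of [H = 0] where [x1 = 0], at which [G] does not vanish. *)
  have p2E : (a / p0) ^+ k * p2 = - a ^+ k.-1 * sectH f 1 0 0.
    have -> : p2 = - (p0 ^+ k * sectH f 1 0 0) / a.
      by apply: (mulIf a_neq0); rewrite mulfVK //; apply/eqP; rewrite -addr_eq0 -Hp_aff.
    rewrite expr_div_n -(prednK k_gt0) exprS; field.
    by rewrite expf_neq0 //; apply/andP.
  have := sectG_homog f_sec (a / p0) p0 p1 p2.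
  rewrite Gp mulr0 mulfVK // p10 mulr0 p2E => Binf_eq0.
  by move: Binf_neq0; rewrite Binf_eq0 eqxx.
pose t := p1^-1; pose y := p0 / p1.
have t_neq0 : t != 0 by rewrite invr_eq0.
have [Gy Hy] : sectG f y 1 (t ^+ k * p2) = 0 /\ sectH f y 1 (t ^+ k * p2) = 0.
  rewrite -(mulVf p1_neq0) /y mulrC (sectG_homog f_sec) (sectH_homog f_sec).
  by rewrite Gp Hp !mulr0.
have p2E : t ^+ k * p2 = z y.
  move: Hy; rewrite (sectH_affine f_sec k_gt0) -/a => Hy.
  by apply: (mulIf a_neq0); rewrite /z mulfVK //; apply/eqP; rewrite -addr_eq0 Hy.
exists y; first by rewrite rs_roots -p2E Gy.
apply/wp_sameP; exists t => //; rewrite !vec3E -p2E /y /t.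
by split=> //; [rewrite mulrC | rewrite mulVf].
Qed.

Lemma contraction_property_of_roots : uniq rs -> size rs = l -> contraction_property k l f.
Proof.
move=> rs_uniq rs_size.
pose r (j : 'I_l) := nth 0 rs j.
have Gr j : sectG f (r j) 1 (z (r j)) = 0.
  by apply/eqP; rewrite -rs_roots mem_nth // rs_size.
split; first exact: piY_inX_surj.
exists (fun j => vec3 (r j) 1 (z (r j))), (fun j => fibre_line (r j) (z (r j))); split.
- by move=> j; apply/wp_point3P; rewrite !vec3E oner_neq0 orbT.
- move=> j j' /wp_sameP[t _ []]; rewrite !vec3E mulr1 => rj t_eq1 _.
  rewrite -t_eq1 mul1r /r in rj.
  apply: val_inj; apply/eqP; rewrite -(nth_uniq 0 _ _ rs_uniq) ?rs_size ?ltn_ord //.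
  by apply/eqP; symmetry.
- by move=> j; split; [exact: fibre_line_P1_morphism | exact: fibre_line_nonconst].
- by move=> j; apply: fibre_over_common_zero => //; apply: sectH_graph.
move=> p p_pt p_not_root x x' xX x'X xp x'p.
apply: (same_orbit_in_fibre _ _ _ _ xX x'X xp x'p) => //.
rewrite -negb_and; apply/negP => /andP[/eqP Gp /eqP Hp].
have [y y_rs p_y] := common_zero_over_root (proj1 (wp_point3P p) p_pt) Gp Hp.
have y_idx : (index y rs < l)%N by rewrite -rs_size index_mem.
by apply: (p_not_root (Ordinal y_idx)); rewrite (vec3_eta p) /r /= nth_index.
Qed.

End GenericSection.

Lemma contraction_property_of_disc (K : closedFieldType) (K0 : [pchar K] =i pred0) k l
    (f : {mpoly K[5]}) :
  (0 < k)%N -> (0 < l)%N -> (l < k + 2)%N -> is_section (wY k l) (1, l%:Z) f ->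
  cf_disc k l (mon_enum k l) (coef_vec k l f) != 0 -> contraction_property k l f.
Proof.
move=> k_gt0 l_gt0 lk2 f_sec.
rewrite /cf_disc !mulf_eq0 !negb_or => /andP[/andP[/andP[a_neq0 Binf_neq0] Bl_neq0] det_neq0].
rewrite cf_a_section // in a_neq0; rewrite cf_Binf_section // in Binf_neq0.
have [rs [rs_uniq rs_size B_roots]] :=
  distinct_roots_of_sylvester K0 l_gt0 (size_cf_B k_gt0 f_sec) Bl_neq0 det_neq0.
apply: (contraction_property_of_roots k_gt0 lk2 f_sec a_neq0 Binf_neq0 _ rs_uniq rs_size).
move=> y; rewrite -B_roots /root horner_cf_B //.
set a := sectH f 0 0 1.
rewrite -[a in sectG f _ a _]mulr1 (_ : - a ^+ k.-1 * _ = a ^+ k * (- sectH f y 1 0 / a)).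
  by rewrite (sectG_homog f_sec) mulf_eq0 expf_eq0 (negbTE a_neq0) andbF.
by rewrite -(prednK k_gt0) exprS /=; field.
Qed.

Definition mon5 (a b c d e : nat) : 'X_{1..5} := [multinom vec5 a b c d e i | i < 5].

(* [y1 y2^l - y1 x1^l + x2 x3], i.e. [G = y2^l - x1^l] and [H = x3]. *)
Definition witness_section (K : fieldType) (l : nat) : {mpoly K[5]} :=
  'X_[mon5 1 l 0 0 0] - 'X_[mon5 1 0 l 0 0] + 'X_[mon5 0 0 0 1 1].

Lemma mmap_witness_section (K : fieldType) (S : comNzRingType) (g : {rmorphism K -> S})
    l (h : 'I_5 -> S) :
  mmap g h (witness_section K l) =
  h ord0 * h (inord 1) ^+ l - h ord0 * h (inord 2) ^+ l + h (inord 3) * h (inord 4).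
Proof. by rewrite mmapD mmapB !mmapX /mmap1 !big_ord5 /= !mnmE !vec5E; ring. Qed.

Lemma witness_is_section (K : fieldType) k l :
  is_section (wY k l) (1, l%:Z) (witness_section K l).
Proof.
move=> m m_supp.
have : m \in [:: mon5 1 l 0 0 0; mon5 1 0 l 0 0; mon5 0 0 0 1 1].
  move: (msuppD_le m_supp); rewrite mem_cat => /orP[/msuppB_le|]; last first.
    by rewrite msuppX !inE => ->; rewrite ?orbT.
  by rewrite mem_cat !msuppX !inE => /orP[] ->; rewrite ?orbT.
rewrite !inE => /orP[|/orP[]] /eqP ->;
  by rewrite !big_ord5 /= !mnmE !vec5E !wYE /=; congr pair; lia.
Qed.

Lemma disc_witness_neq0 (K : fieldType) (K0 : [pchar K] =i pred0) k l :
  (0 < k)%N -> (0 < l)%N ->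
  cf_disc k l (mon_enum k l) (coef_vec k l (witness_section K l)) != 0.
Proof.
move=> k_gt0 l_gt0.
have w_sec := @witness_is_section K k l.
have meval_w (x : 'I_5 -> K) : (witness_section K l).@[x] =
    x ord0 * x (inord 1) ^+ l - x ord0 * x (inord 2) ^+ l + x (inord 3) * x (inord 4).
  exact: (mmap_witness_section idfun).
have a1 : cf_a (mon_enum k l) (coef_vec k l (witness_section K l)) = 1.
  by rewrite cf_a_section // /sectH [LHS]meval_w !vec5E expr0n gtn_eqF // !mulr0 subrr add0r mulr1.
have Binf1 : cf_Binf k (mon_enum k l) (coef_vec k l (witness_section K l)) = 1.
  rewrite cf_Binf_section // /sectG /sectH !meval_w !vec5E expr0n gtn_eqF //.
  by rewrite !(mul0r, mulr0, mul1r, mulr1, subr0, addr0, add0r) expr1n.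
have B_E : cf_B k (mon_enum k l) (coef_vec k l (witness_section K l)) = 'X^l - 1.
  rewrite /cf_B (eval_coefs_section k_gt0 w_sec polyC) mmap_witness_section !vec5E a1.
  by rewrite polyC1 mul0r addr0 !mul1r expr1n.
rewrite /cf_disc a1 Binf1 B_E !mul1r coefB coefXn coef1 eqxx gtn_eqF // subr0 mul1r.
have l_neq0 : (l%:R : K) != 0 by move/pcharf0P: K0 => ->; rewrite -lt0n.
have dB : ('X^l - 1 : {poly K})^`() = l%:R *: 'X^(l.-1).
  by rewrite derivB derivXn -polyC1 derivC subr0 scaler_nat.
have B'_size : size ('X^l - 1 : {poly K})^`() = l.
  by rewrite dB size_scale // size_polyXn prednK.
have coprimeB : coprimep ('X^l - 1 : {poly K}) ('X^l - 1)^`().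
  apply/Bezout_coprimepP; exists (-1, (l%:R^-1)%:P * 'X) => /=.
  have -> : (l%:R^-1)%:P * 'X * ('X^l - 1)^`() = 'X^l :> {poly K}.
    by rewrite dB -mul_polyC mulrACA -polyCM mulVf // polyC1 mul1r -exprS prednK.
  by rewrite mulN1r opprB subrK eqpxx.
have := resultant_sylvester_mxn ('X^l - 1 : {poly K}) ('X^l - 1)^`().
have B_size : size ('X^l - 1 : {poly K}) = l.+1 by rewrite -polyC1 size_XnsubC.
rewrite B_size B'_size /= => <-.
by rewrite resultant_eq0 -leqNgt; move: coprimeB; rewrite /coprimep => /eqP ->.
Qed.

Unset Implicit Arguments.
Set Strict Implicit.

Theorem proposition4p2 (K : closedFieldType) (hK : [pchar K] =i pred0)
    (k l : nat) (hk : (0 < k)%N) (hl : (0 < l)%N) (hlk : (l < k + 2)%N) :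
  @holds_generally K 5 (@is_section K 5 (wY k l) ((1 : int), (l%:Z)))
                  (@contraction_property K k l).
Proof.
exists (nmon k l), (mon_enum k l), (disc_mpoly K k l (mon_enum k l)); split.
  exists (witness_section K l); split; first exact: witness_is_section.
  by rewrite meval_disc_mpoly; apply: disc_witness_neq0.
move=> f f_sec; rewrite meval_disc_mpoly; exact: contraction_property_of_disc.
Qed.
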